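(* Consider the coordination game described in the context in which each agent $i$ observes only the signal $z_i=A-\theta+\rho_i$. Suppose $\rho_i\in[-\sigma,\sigma]$ almost surely (its density vanishes outside $[-\sigma,\sigma]$), where $0<\sigma<\tfrac12$. Then there exists a continuum (an uncountable family) of distinct equilibria $A(\cdot)$.
   Context: A unit mass of agents $i\in[0,1]$ each choose $a_i\in\{0,1\}$ ($a_i=1$: attack the status quo). The aggregate attack is $A=\int_0^1 a_i\,di$. The status quo has strength $\theta\in\mathbb{R}$ and is abandoned iff $A\ge\theta$. An attacking agent pays cost $c\in(0,1)$ and gets $1$ if the status quo is abandoned, otherwise nothing; not attacking yields $0$. Agents hold an (improper) uniform prior over $\theta$ on $\mathbb{R}$. Agent $i$ receives a single private signal $z_i=A-\theta+\rho_i$, where the errors $\rho_i$ are i.i.d. across agents with density $g$; the structure is common knowledge. Given a conjectured (measurable) aggregate attack function $A:\mathbb{R}\to[0,1]$, the posterior of an agent with signal $z$ is $P[\theta\in S\mid z,A(\cdot)]=\int_S g(z-A(\theta)+\theta)\,d\theta\big/\int_{\mathbb{R}} g(z-A(\theta)+\theta)\,d\theta$. An equilibrium is a function $A:\mathbb{R}\to[0,1]$ such that for all $\theta\in\mathbb{R}$, $A(\theta)=\int_{\mathbb{R}}\chi\{\rho: P[A(\theta')\ge\theta'\mid z=A(\theta)-\theta+\rho,\,A(\cdot)]\ge c\}\,g(\rho)\,d\rho$, where $\theta'$ is the random fundamental under the posterior and $\chi$ is the indicator function. *)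

From HB Require Import structures.
From mathcomp Require Import all_boot all_order all_algebra.
From mathcomp Require Import all_classical all_reals all_analysis.
Set Implicit Arguments. Unset Strict Implicit. Unset Printing Implicit Defensive.
Import Order.TTheory GRing.Theory Num.Theory.
Import numFieldNormedType.Exports.
Local Open Scope classical_set_scope.
Local Open Scope ring_scope.

(* Unnormalized posterior weight of theta given signal z under conjectured
   aggregate attack A: g (z - A theta + theta). *)
Definition post_weight {R : realType} (g : R -> R) (A : R -> R) (z : R) (th : R) : R :=
  g (z - A th + th).

(* Posterior probability P[theta in S | z, A(.)] under the improper uniform
   prior: ratio of Lebesgue integrals (real-valued via [fine]). *)
Definition posterior {R : realType} (g : R -> R) (A : R -> R) (z : R) (S : set R) : R :=
  fine (\int[@lebesgue_measure R]_(th in S) (post_weight g A z th)%:E)%E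
  / fine (\int[@lebesgue_measure R]_th (post_weight g A z th)%:E)%E.

Definition post_abandon {R : realType} (g : R -> R) (A : R -> R) (z : R) : R :=
  posterior g A z [set th | th <= A th].

Definition is_density {R : realType} (g : R -> R) : Prop :=
  measurable_fun setT g /\ (forall x, 0 <= g x) /\
  (\int[@lebesgue_measure R]_x (g x)%:E = 1)%E.

Definition equilibrium {R : realType} (c : R) (g : R -> R) (A : R -> R) : Prop :=
  measurable_fun setT A /\ (forall th, 0 <= A th <= 1) /\
  forall th,
    (A th)%:E =
    (\int[@lebesgue_measure R]_rho
       ((\1_[set r | c <= post_abandon g A (A th - th + r)] rho : R) * g rho)%:E)%E.

(* Every threshold profile "attack iff theta <= k" with 0 <= k <= 1 is an
   equilibrium, and distinct k give distinct profiles.  Because the noise is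
   bounded by sigma < 1/2, the signal A(theta) - theta + rho reveals which
   regime theta is in.  If theta > k nobody attacks, and the posterior puts no
   weight on the abandonment region theta' <= k.  If theta <= k everybody
   attacks and all posterior weight lies in theta' <= k, so the posterior
   is 1 unless the weight vanishes.  After a translation, that weight is the
   cumulative integral G of g at rho + k - theta.  The zero set of G is a
   closed half-line (-oo, s] of g-mass G(s) = 0, so almost every agent
   attacks. *)

From HB Require Import structures.
From mathcomp Require Import all_boot all_order all_algebra.
From mathcomp Require Import all_classical all_reals all_analysis.
From mathcomp Require Import measurable_realfun lra.
Import Order.TTheory GRing.Theory Num.Theory.
Local Open Scope classical_set_scope.
Local Open Scope ring_scope.

Local Notation mu := lebesgue_measure.

Section lebesgue_translation.
Context {R : realType}.

Lemma measurable_addr (a : R) : measurable_fun setT (fun x : R => x + a).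
Proof. by apply: measurable_funD => //; exact: measurable_cst. Qed.

Lemma lebesgue_measure_addr (a : R) (A : set R) : measurable A ->
  pushforward mu ((fun x : R => x + a) : _ -> measurableTypeR R) A = mu A.
Proof.
move=> mA; apply/esym/lebesgue_measure_unique => //; first exact: measurable_addr.
move=> ? _ [[x y] _ <-] /=.
transitivity (mu `]x - a, y - a]%classic); last first.
  by congr (mu _); apply/seteqP; split => u /=; rewrite !in_itv /= ltrBlDr lerBrDr.
rewrite !lebesgue_measure_itv /= !lte_fin ltrD2r.
by case: ifP => // _; rewrite -!EFinD; congr EFin; lra.
Qed.

Local Open Scope ereal_scope.

Lemma ge0_integral_addr (a : R) (f : R -> \bar R) :
  measurable_fun setT f -> (forall x, 0 <= f x) ->
  \int[mu]_x f (x + a)%R = \int[mu]_x f x.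
Proof.
move=> mf f0.
have := @ge0_integral_pushforward _ _ (measurableTypeR R) (measurableTypeR R) R
  ((fun x => x + a)%R : _ -> measurableTypeR R) (measurable_addr a) mu setT f
  measurableT mf (fun y _ => f0 y).
rewrite preimage_setT => <-; apply: eq_measure_integral => [|? A mA _].
  exact: measurable_addr.
exact: lebesgue_measure_addr.
Qed.

End lebesgue_translation.

Definition cumul {R : realType} (g : R -> R) (y : R) : \bar R :=
  (\int[mu]_(x in `]-oo, y]) (g x)%:E)%E.

Section cumulative_integral.
Context {R : realType} {g : R -> R}.
Hypotheses (mg : measurable_fun setT g) (g_ge0 : forall x, 0 <= g x).
Local Open Scope ereal_scope.
Local Notation cumul := (cumul g).

Let mgE (D : set R) : measurable_fun D (fun x => (g x)%:E).
Proof. exact/measurable_EFinP/measurable_funTS. Qed.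

Let gE_ge0 (D : set R) x : D x -> 0 <= (g x)%:E.
Proof. by rewrite lee_fin. Qed.

Lemma cumul_ge0 y : 0 <= cumul y.
Proof. by apply: integral_ge0 => x _; rewrite lee_fin. Qed.

Lemma le_cumul : {homo cumul : x y / (x <= y)%R >-> x <= y}.
Proof.
move=> x y xy; apply: ge0_subset_integral => //; [exact: mgE|exact: gE_ge0|].
by apply: subset_itvl; rewrite bnd_simp.
Qed.

Lemma cumul_le_integral y : cumul y <= \int[mu]_x (g x)%:E.
Proof. by apply: ge0_subset_integral => //; [exact: mgE|exact: gE_ge0]. Qed.

Lemma integral_cumul_split a :
  \int[mu]_x (g x)%:E = cumul a + \int[mu]_(x in `]a, +oo[) (g x)%:E.
Proof.
rewrite /cumul -ge0_integral_setU ?itv_setU_setT //; [exact: mgE|exact: gE_ge0|].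
by apply/disj_setPS => x []; rewrite /= !in_itv /= andbT => /le_lt_trans h /h; rewrite ltxx.
Qed.

(* True because the measure g(x)dx has no atom at s. *)
Lemma cumul_left_eq0 s : (forall x, (x < s)%R -> cumul x = 0) -> cumul s = 0.
Proof.
move=> cumul0.
pose F (n : nat) : set R := `]-oo, (s - n.+1%:R^-1)%R]%classic.
have F_nd : nondecreasing_seq F.
  move=> n m nm; rewrite subsetEset; apply: subset_itvl; rewrite bnd_simp.
  by rewrite lerD2l lerN2 lef_pV2 ?posrE ?ltr0n // ler_nat.
have lt_s n : (s - n.+1%:R^-1 < s)%R by rewrite ltrBlDr ltrDl invr_gt0 ltr0n.
have UF : \bigcup_n F n = `]-oo, s[%classic.
  apply/seteqP; split=> x /=.
    by move=> [n _]; rewrite /F /= !in_itv /= => /le_lt_trans; apply.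
  rewrite in_itv /= => xs; exists (Num.truncn ((s - x)^-1)) => //=.
  rewrite /F /= in_itv /= lerBrDr addrC -lerBrDr.
  rewrite -[leRHS](invrK (s - x)%R) ltW // ltf_pV2 ?posrE ?ltr0n ?invr_gt0 ?subr_gt0 //.
  exact: truncnS_gt.
have := @ge0_nondecreasing_set_cvg_integral _ (measurableTypeR R) R F _ mu F_nd
  (fun=> measurable_itv _) (fun=> mgE _) (fun=> gE_ge0 _).
rewrite UF (_ : (fun n => _) = cst 0); last first.
  by apply/funext => n; exact: cumul0.
move/(cvg_unique _ (cvg_cst 0)) => -> //.
by rewrite /cumul -integral_itv_bndo_bndc.
Qed.

Lemma cumul_eq0_halfline a b : cumul a = 0 -> cumul b != 0 ->
  exists s, forall x, cumul x = 0 <-> (x <= s)%R.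
Proof.
move=> ga0 gb0; pose W := [set x | cumul x = 0].
have cumul_down x y : (x <= y)%R -> cumul y = 0 -> cumul x = 0.
  by move=> xy gy0; apply/eqP; rewrite eq_le cumul_ge0 andbT -gy0 le_cumul.
have W_ub x : W x -> (x <= b)%R.
  move=> Wx; rewrite leNgt; apply/negP => /ltW bx.
  by move: gb0; rewrite (cumul_down _ _ bx Wx) eqxx.
have W_sup : has_sup W by split; [exists a | exists b => x /W_ub].
exists (sup W) => x; split => [Wx|xs]; first exact: sup_upper_bound.
apply: (cumul_down _ _ xs); apply: cumul_left_eq0 => y ys.
have [|e We] := @sup_adherent _ W (sup W - y)%R _ W_sup; first by rewrite subr_gt0.
by rewrite opprB addrC subrK => /ltW ye; exact: (cumul_down _ _ ye We).
Qed.

End cumulative_integral.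

Definition induced_attack {R : realType} (c : R) (g A : R -> R) (th : R) : \bar R :=
  (\int[mu]_rho
     ((\1_[set r | c <= post_abandon g A (A th - th + r)] rho : R) * g rho)%:E)%E.

Section posterior_support.
Context {R : realType} (g A : R -> R) (z : R) (S : set R).
Local Open Scope ereal_scope.

Lemma posterior_eq0 :
  (forall th, S th -> post_weight g A z th = 0%R) -> posterior g A z S = 0%R.
Proof.
move=> w0; rewrite /posterior.
under eq_integral => th /set_mem /w0 -> do [].
by rewrite integral0 /= mul0r.
Qed.

(* The ratio N / N is 0, not 1, when N = 0. *)
Lemma posterior_eq_indicator :
  (forall th, ~ S th -> post_weight g A z th = 0%R) ->
  posterior g A z S = (fine (\int[mu]_(th in S) (post_weight g A z th)%:E) != 0%R)%:R.
Proof.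
move=> w0; rewrite /posterior.
have -> : \int[mu]_th (post_weight g A z th)%:E =
          \int[mu]_(th in S) (post_weight g A z th)%:E.
  rewrite [RHS]integral_mkcond; apply: eq_integral => th _; rewrite patchE.
  by case: ifPn => // /negP; rewrite inE => /w0 ->.
by case: eqP => [->|/eqP /divff //]; rewrite mul0r.
Qed.

End posterior_support.

Section threshold_strategy.
Context {R : realType}.

Definition threshold (k : R) (th : R) : R := if th <= k then 1 else 0.

Lemma threshold_inj : injective threshold.
Proof.
move=> k1 k2 eq12; apply/eqP; rewrite eq_le; apply/andP; split; rewrite leNgt.
  have := congr1 (fun A => A k1) eq12; rewrite /threshold lexx.
  by case: ltP => // _ /eqP; rewrite oner_eq0.
have := congr1 (fun A => A k2) eq12; rewrite /threshold lexx.
by case: ltP => // _ /eqP; rewrite eq_sym oner_eq0.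
Qed.

Lemma measurable_threshold k : measurable_fun setT (threshold k).
Proof.
have -> : threshold k = \1_`]-oo, k] :> (R -> R).
  by apply/funext => x; rewrite indicE mem_setE in_itv /= /threshold; case: ifP.
exact: measurable_indic.
Qed.

Lemma threshold_abandon_set (k : R) : 0 <= k <= 1 ->
  [set th | th <= threshold k th] = `]-oo, k]%classic.
Proof.
move=> /andP[k0 k1]; apply/seteqP; split => th /=; rewrite in_itv /= /threshold.
  by case: ifP => // /negbT; rewrite -ltNge => kth th0; lra.
by move=> thk; rewrite thk; lra.
Qed.

End threshold_strategy.

Section threshold_equilibrium.
Context {R : realType} {c sigma : R} {g : R -> R}.
Hypotheses (c_gt0 : 0 < c) (c_le1 : c <= 1) (sigma_lt : sigma < 1 / 2).
Hypotheses (mg : measurable_fun setT g) (g_ge0 : forall x, 0 <= g x).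
Hypotheses (g_int1 : (\int[mu]_x (g x)%:E = 1)%E)
  (g_out : forall x, sigma < `|x| -> g x = 0).

Let two_sigma_lt1 : sigma + sigma < 1.
Proof. by rewrite -mulr2n -mulr_natr -ltr_pdivlMr. Qed.

Let g_eq0_gt x : sigma < x -> g x = 0.
Proof. by move=> sx; apply: g_out; rewrite ltr_normr sx. Qed.

Let g_eq0_lt x : x < - sigma -> g x = 0.
Proof. by move=> xs; apply: g_out; rewrite ltr_normr ltrNr xs orbT. Qed.

Let g_neq0_bound x : g x != 0 -> - sigma <= x <= sigma.
Proof. by rewrite -ler_norml leNgt; apply: contra => /g_out/eqP. Qed.

Lemma cumul_eq1 y : sigma <= y -> cumul g y = 1%E.
Proof.
move=> sy; rewrite /cumul integral_mkcond -g_int1; apply: eq_integral => x _.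
rewrite patchE; case: ifPn => //; rewrite mem_setE in_itv /= -ltNge => yx.
by rewrite g_eq0_gt //; lra.
Qed.

Lemma cumul_eq0 y : y < - sigma -> cumul g y = 0%E.
Proof.
move=> ys; rewrite /cumul -(integral0 mu `]-oo, y]%classic).
apply: eq_integral => x /set_mem; rewrite /= in_itv /= => xy.
by rewrite g_eq0_lt //; lra.
Qed.

Let fin_num_cumul y : cumul g y \is a fin_num.
Proof.
rewrite ge0_fin_numE ?cumul_ge0 //.
by apply: le_lt_trans (cumul_le_integral mg g_ge0 y) _; rewrite g_int1 ltry.
Qed.

Lemma post_abandon_threshold_eq0 (k z : R) : 0 <= k <= 1 -> z + k - 1 < - sigma ->
  post_abandon g (threshold k) z = 0.
Proof.
move=> k01 zk; rewrite /post_abandon threshold_abandon_set //.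
apply: posterior_eq0 => th; rewrite /= in_itv /= => thk.
by rewrite /post_weight /threshold thk g_eq0_lt //; lra.
Qed.

Lemma post_abandon_threshold (k z : R) : 0 <= k <= 1 -> sigma <= z + k ->
  post_abandon g (threshold k) z = (cumul g (z + k - 1) != 0%E)%:R.
Proof.
move=> k01 zk; rewrite /post_abandon threshold_abandon_set //.
rewrite posterior_eq_indicator; last first.
  move=> th; rewrite /= in_itv /= => /negP; rewrite -ltNge => kth.
  by rewrite /post_weight /threshold leNgt kth /= g_eq0_gt //; lra.
suff -> : (\int[mu]_(th in `]-oo, k]) (post_weight g (threshold k) z th)%:E)%E =
          cumul g (z + k - 1) by rewrite fine_eq0.
rewrite integral_mkcond /cumul [RHS]integral_mkcond -[RHS](ge0_integral_addr (z - 1)).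
- apply: eq_integral => th _; rewrite !patchE !mem_setE !in_itv /=.
  have -> : (th + (z - 1) <= z + k - 1) = (th <= k) by apply/idP/idP; lra.
  case: ifP => // thk; rewrite /post_weight /threshold thk.
  by congr (g _)%:E; lra.
- apply/(measurable_restrictT _ (measurable_itv _)).
  exact/measurable_EFinP/measurable_funTS.
- by move=> x; rewrite patchE; case: ifP; rewrite // lee_fin.
Qed.

Lemma induced_attack_threshold_gt (k th : R) : 0 <= k <= 1 -> k < th ->
  induced_attack c g (threshold k) th = 0%E.
Proof.
move=> k01 kth; rewrite /induced_attack -(integral0 mu setT).
apply: eq_integral => rho _.
have [->|/g_neq0_bound/andP[rho_lo rho_hi]] := eqVneq (g rho) 0; first by rewrite mulr0.
rewrite indicE memNset ?mul0r //= post_abandon_threshold_eq0 //.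
  by rewrite leNgt c_gt0.
by have := two_sigma_lt1; rewrite /threshold leNgt kth add0r; lra.
Qed.

Lemma induced_attack_threshold_le (k th : R) : 0 <= k <= 1 -> th <= k ->
  induced_attack c g (threshold k) th = 1%E.
Proof.
move=> k01 thk.
have cumulN1 : cumul g (-1) = 0%E by apply: cumul_eq0; have := two_sigma_lt1; lra.
have cumul_sigma : cumul g sigma != 0%E by rewrite cumul_eq1 // oner_eq0.
have [s cumul0P] := cumul_eq0_halfline mg g_ge0 _ _ cumulN1 cumul_sigma.
transitivity (\int[mu]_(x in `](s - (k - th))%R, +oo[) (g x)%:E)%E; last first.
  have := integral_cumul_split mg g_ge0 (s - (k - th)).
  by rewrite g_int1 (proj2 (cumul0P _)) ?add0e //; lra.
rewrite [RHS]integral_mkcond; apply: eq_integral => rho _.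
rewrite patchE mem_setE in_itv /= andbT indicE /threshold thk.
have [->|/g_neq0_bound/andP[rho_lo rho_hi]] := eqVneq (g rho) 0.
  by rewrite mulr0; case: ifP.
have post_eq : post_abandon g (threshold k) (1 - th + rho) =
               (cumul g (rho + (k - th)) != 0%E)%:R.
  rewrite post_abandon_threshold //; last by have := two_sigma_lt1; lra.
  by congr (cumul g _ != 0%E)%:R; lra.
have [cumul_eq0|cumul_neq0] := eqVneq (cumul g (rho + (k - th))) 0%E.
  have le_s := (cumul0P _).1 cumul_eq0.
  rewrite memNset ?mul0r; last by rewrite /= post_eq cumul_eq0 eqxx /= leNgt c_gt0.
  by rewrite ltNge (_ : rho <= s - (k - th)) //; lra.
rewrite mem_set ?mul1r; last by rewrite /= post_eq cumul_neq0.
rewrite ltNge; case: leP => // rho_le; move: cumul_neq0.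
by rewrite (cumul0P _).2 ?eqxx //; lra.
Qed.

Lemma equilibrium_threshold (k : R) : 0 <= k <= 1 -> equilibrium c g (threshold k).
Proof.
move=> k01; split; first exact: measurable_threshold.
split => [th|th]; first by rewrite /threshold; case: ifP; lra.
rewrite -[RHS]/(induced_attack c g (threshold k) th).
have [thk|kth] := leP th k.
  by rewrite induced_attack_threshold_le // /threshold thk.
by rewrite induced_attack_threshold_gt // /threshold leNgt kth.
Qed.

End threshold_equilibrium.

Theorem proposition3 (R : realType) (c sigma : R) (g : R -> R) :
  0 < c < 1 ->
  0 < sigma < 1 / 2 ->
  is_density g ->
  (forall x, sigma < `|x| -> g x = 0) ->
  exists F : R -> (R -> R), injective F /\ forall t, equilibrium c g (F t).
Proof.
move=> /andP[c_gt0 c_lt1] /andP[_ sigma_lt] [mg [g_ge0 g_int1]] g_out.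
exists (fun t => threshold (1 + expR t)^-1); split.
  by move=> t1 t2 /threshold_inj /invr_inj /addrI /expR_inj.
move=> t; apply: (equilibrium_threshold c_gt0 (ltW c_lt1) sigma_lt mg g_ge0 g_int1 g_out).
have expR_pos : 0 < 1 + expR t by rewrite addr_gt0 ?expR_gt0.
by rewrite invr_ge0 ltW //= invf_le1 // lerDl expR_ge0.
Qed.
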